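(* If $A$ is a normal uniform Kan complex, then the canonical map $p:A^{\mathrm{I}}\to A\times A$ admits the structure of a normal uniform Kan fibration.
   Context: Let $\mathbb{B}$ be the category of finite sets $[n]=\{\bot,x_1,\dots,x_n,\top\}$ ($n\ge0$, $\bot\ne\top$) and functions preserving $\bot,\top$; cartesian cubical sets are presheaves on $\mathbb{B}^{op}$. $\mathrm{I}^n$ is the representable on $[n]$, $\mathrm{I}^n\cong\mathrm{I}\times\dots\times\mathrm{I}$, $\mathrm{I}=\mathrm{I}^1$, $\mathrm{I}^0=1$; the two maps $[1]\to[0]$ give endpoints $0,1:1\to\mathrm{I}$, and $p:A^{\mathrm{I}}\to A^{\partial\mathrm{I}}\cong A\times A$ is induced by the copairing $\partial\mathrm{I}=1+1\to\mathrm{I}$. For $1\le i\le n$, $d\in\{0,1\}$, the face $\alpha_i^d:\mathrm{I}^{n-1}\to\mathrm{I}^n$ inserts $d$ in coordinate $i$; for $e\in\{0,1\}$ the open box $\sqcup^n_e\rightarrowtail\mathrm{I}^n$ is the union of the images of all faces $\alpha_i^d$ with $(i,d)\ne(1,e)$, with inclusion $i^n_e$. A uniform Kan fibration structure on $f:Y\to X$: for each $n\ge1$, $e\in\{0,1\}$, $k\ge1$ and commutative square $b:\mathrm{I}^k\times\sqcup^n_e\to Y$, $a:\mathrm{I}^k\times\mathrm{I}^n\to X$ with $fb=a(1\times i^n_e)$, a chosen filler $\phi(a,b)$ ($\phi(a,b)(1\times i^n_e)=b$, $f\phi(a,b)=a$) with $\phi(a,b)(\alpha\times1)=\phi(a(\alpha\times1),b(\alpha\times1))$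 for all $\alpha:\mathrm{I}^j\to\mathrm{I}^k$ ($j\ge1$). It is normal if for all $n\ge0$, $e\in\{0,1\}$, $k\ge1$ and every $c:\mathrm{I}^k\times\mathrm{I}^n\to Y$, letting $\pi:\mathrm{I}^{n+1}\to\mathrm{I}^n$ be the projection forgetting the first coordinate, $\phi\big(f c(1\times\pi),\ c(1\times\pi)(1\times i^{n+1}_e)\big)=c(1\times\pi)$. A (normal) uniform Kan complex is a cubical set $A$ with a (normal) uniform Kan fibration structure on $A\to1$. *)

From HB Require Import structures.
From mathcomp Require Import all_boot.
From Stdlib Require Import FunctionalExtensionality ProofIrrelevance.

Set Implicit Arguments.
Unset Strict Implicit.
Unset Printing Implicit Defensive.

(* The set [n] = {bot, x_1, ..., x_n, top} is  Pt n = bool + 'I_n :   *)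
(*   inl false = bot,  inl true = top,  inr i = x_(i+1).              *)
Definition Pt (n : nat) : Type := (bool + 'I_n)%type.

Record Bmor (n m : nat) := BMor {
  bfun :> Pt n -> Pt m;
  bfun_bot : bfun (inl false) = inl false;
  bfun_top : bfun (inl true) = inl true }.

Lemma Bmor_eq n m (f g : Bmor n m) : (forall x, f x = g x) -> f = g.
Proof.
case: f g => f f0 f1 [g g0 g1] /= E.
have Efg : f = g by apply: functional_extensionality.
subst g; f_equal; apply: proof_irrelevance.
Qed.

Definition bid n : Bmor n n := @BMor n n (fun x => x) erefl erefl.

Lemma bcomp_bot n m l (g : Bmor m l) (f : Bmor n m) :
  g (f (inl false)) = inl false.
Proof. by rewrite !bfun_bot. Qed.
Lemma bcomp_top n m l (g : Bmor m l) (f : Bmor n m) :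
  g (f (inl true)) = inl true.
Proof. by rewrite !bfun_top. Qed.

Definition bcomp n m l (g : Bmor m l) (f : Bmor n m) : Bmor n l :=
  @BMor n l (fun x => g (f x)) (bcomp_bot g f) (bcomp_top g f).

Definition ptmap n m (h : 'I_n -> 'I_m) (x : Pt n) : Pt m :=
  match x with inl b => inl b | inr i => inr (h i) end.

(* The B-map [n+1] -> [n] sending x_i to the endpoint d (and renumbering
   the other variables); it induces the face alpha_i^d : I^n -> I^(n+1)
   inserting d in coordinate i (here i : 'I_n.+1 is 0-indexed). *)
Definition face n (i : 'I_n.+1) (d : bool) : Bmor n.+1 n :=
  @BMor n.+1 n (fun x => match x with
                       | inl b => inl b
                       | inr j => match unlift i j with
                                  | None => inl d
                                  | Some j' => inr j'
                                  end
                       end) erefl erefl.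

(* The B-map [n] -> [n+1], x_j |-> x_(j+1); it induces the projection
   I^(n+1) -> I^n forgetting the first coordinate. *)
Definition shift n : Bmor n n.+1 :=
  @BMor n n.+1 (ptmap (lift ord0)) erefl erefl.

(* f : [n] -> [m]  gives  f + id : [n+1] -> [m+1], the new variable being
   the last one x_(n+1) |-> x_(m+1). *)
Definition extend n m (f : Bmor n m) : Bmor n.+1 m.+1 :=
  @BMor n.+1 m.+1 (fun x => match x with
                          | inl b => inl b
                          | inr j => match unlift ord_max j with
                                     | None => inr ord_max
                                     | Some j' => ptmap (lift ord_max) (f (inr j'))
                                     end
                          end) erefl erefl.

Lemma extend_id n : extend (bid n) = bid n.+1.
Proof.
apply: Bmor_eq => [[b|j]] //=.
by case: unliftP => [j'|] E; rewrite E.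
Qed.

Lemma extend_comp n m l (g : Bmor m l) (f : Bmor n m) :
  extend (bcomp g f) = bcomp (extend g) (extend f).
Proof.
apply: Bmor_eq => [[b|j]] //=.
case: unliftP => [j'|] _ /=; last by rewrite unlift_none.
case Ef: (f (inr j')) => [b|k] /=.
  by case: b Ef => _; rewrite ?bfun_bot ?bfun_top.
by rewrite liftK.
Qed.

Lemma face_extend n m (f : Bmor n m) (d : bool) :
  bcomp (face ord_max d) (extend f) = bcomp f (face ord_max d).
Proof.
apply: Bmor_eq => [[b|j]] /=; first by case: b; rewrite ?bfun_bot ?bfun_top.
case: unliftP => [j'|] _ /=; last first.
  by rewrite unlift_none; case: d; rewrite ?bfun_bot ?bfun_top.
by case: (f (inr j')) => [b|k] //=; rewrite liftK.
Qed.

(* Cartesian cubical sets: presheaves on B^op, i.e. functors B -> Set. *)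
Record cSet := CSet {
  cobj :> nat -> Type;
  cact : forall n m, Bmor n m -> cobj n -> cobj m;
  cact_id : forall n x, cact (bid n) x = x;
  cact_comp : forall n m l (g : Bmor m l) (f : Bmor n m) x,
      cact (bcomp g f) x = cact g (cact f x) }.
Arguments cact {c n m}.

Record cMap (X Y : cSet) := CMap {
  cmap :> forall n, X n -> Y n;
  cmap_nat : forall n m (f : Bmor n m) x, cmap (cact f x) = cact f (cmap x) }.
Arguments cmap {X Y} c n x.

Definition ceq X Y (f g : cMap X Y) : Prop := forall n x, f n x = g n x.

Lemma ccomp_nat X Y Z (g : cMap Y Z) (f : cMap X Y) n m (h : Bmor n m) x :
  g m (f m (cact h x)) = cact h (g n (f n x)).
Proof. by rewrite !cmap_nat. Qed.

Definition ccomp X Y Z (g : cMap Y Z) (f : cMap X Y) : cMap X Z :=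
  @CMap X Z (fun n x => g n (f n x)) (ccomp_nat g f).

Definition Term : cSet :=
  @CSet (fun _ => unit) (fun _ _ _ x => x) (fun _ _ => erefl) (fun _ _ _ _ _ _ => erefl).

Definition toTerm (X : cSet) : cMap X Term :=
  @CMap X Term (fun _ _ => tt) (fun _ _ _ _ => erefl).

Lemma prodc_id (X Y : cSet) n (x : X n * Y n) :
  (cact (bid n) x.1, cact (bid n) x.2) = x.
Proof. by rewrite !cact_id; case: x. Qed.
Lemma prodc_comp (X Y : cSet) n m l (g : Bmor m l) (f : Bmor n m) (x : X n * Y n) :
  (cact (bcomp g f) x.1, cact (bcomp g f) x.2) =
  (cact g (cact f x.1, cact f x.2).1, cact g (cact f x.1, cact f x.2).2).
Proof. by rewrite !cact_comp. Qed.

Definition prodc (X Y : cSet) : cSet :=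
  @CSet (fun n => (X n * Y n)%type)
        (fun n m f x => (cact f x.1, cact f x.2))
        (@prodc_id X Y) (@prodc_comp X Y).

Lemma pmap1_nat Z X Y (g : cMap X Y) n m (f : Bmor n m) (x : prodc Z X n) :
  ((cact f x.1, cact f x.2).1, g m (cact f x.1, cact f x.2).2)
  = (cact f (x.1, g n x.2).1, cact f (x.1, g n x.2).2).
Proof. by rewrite /= cmap_nat. Qed.
Definition pmap1 Z X Y (g : cMap X Y) : cMap (prodc Z X) (prodc Z Y) :=
  @CMap (prodc Z X) (prodc Z Y) (fun n x => (x.1, g n x.2)) (@pmap1_nat Z X Y g).

Lemma pmapl_nat Z X Y (g : cMap X Y) n m (f : Bmor n m) (x : prodc X Z n) :
  (g m (cact f x.1, cact f x.2).1, (cact f x.1, cact f x.2).2)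
  = (cact f (g n x.1, x.2).1, cact f (g n x.1, x.2).2).
Proof. by rewrite /= cmap_nat. Qed.
Definition pmapl Z X Y (g : cMap X Y) : cMap (prodc X Z) (prodc Y Z) :=
  @CMap (prodc X Z) (prodc Y Z) (fun n x => (g n x.1, x.2)) (@pmapl_nat Z X Y g).

(* representables: I^n = B([n], -) *)
Lemma bcomp_id1 n m (g : Bmor n m) : bcomp (bid m) g = g.
Proof. exact: Bmor_eq. Qed.
Lemma bcomp_assoc n m l k (h : Bmor l k) (f : Bmor m l) (g : Bmor n m) :
  bcomp (bcomp h f) g = bcomp h (bcomp f g).
Proof. exact: Bmor_eq. Qed.

Definition Rep (n : nat) : cSet :=
  @CSet (fun m => Bmor n m) (fun m l f g => bcomp f g)
        (fun m g => bcomp_id1 g) (fun m l k h f g => bcomp_assoc h f g).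

Lemma yon_nat n n' (d : Bmor n' n) m l (f : Bmor m l) (g : Rep n m) :
  bcomp (bcomp f g) d = bcomp f (bcomp g d).
Proof. exact: bcomp_assoc. Qed.
Definition yon n n' (d : Bmor n' n) : cMap (Rep n) (Rep n') :=
  @CMap (Rep n) (Rep n') (fun m g => bcomp g d) (@yon_nat n n' d).

(* alpha_i^d : I^n -> I^(n+1) ; i : 'I_n.+1 is coordinate i+1 *)
Definition alpha n (i : 'I_n.+1) (d : bool) : cMap (Rep n) (Rep n.+1) :=
  yon (face i d).

Definition proj1c n : cMap (Rep n.+1) (Rep n) := yon (shift n).

Definition inBox n (e : bool) m (g : Bmor n.+1 m) : Prop :=
  exists (i : 'I_n.+1) (d : bool), (i, d) <> (ord0, e) /\
    exists h : Rep n m, g = alpha i d m h.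

Lemma inBox_act n e m l (f : Bmor m l) (g : Bmor n.+1 m) :
  inBox e g -> inBox e (bcomp f g).
Proof.
case=> i [d [ne [h ->]]]; exists i, d; split => //.
by exists (bcomp f h); rewrite /= bcomp_assoc.
Qed.

Lemma sig_eq (A : Type) (P : A -> Prop) (x y : sig P) :
  proj1_sig x = proj1_sig y -> x = y.
Proof.
case: x y => x px [y py] /= E; subst y; f_equal; apply: proof_irrelevance.
Qed.

Definition Box_act n e m l (f : Bmor m l) (x : {g : Bmor n.+1 m | inBox e g}) :
  {g : Bmor n.+1 l | inBox e g} :=
  exist _ (bcomp f (proj1_sig x)) (inBox_act f (proj2_sig x)).

Lemma Box_id n e m (x : {g : Bmor n.+1 m | inBox e g}) : Box_act (bid m) x = x.
Proof. by apply: sig_eq; rewrite /= bcomp_id1. Qed.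
Lemma Box_comp n e m l k (h : Bmor l k) (f : Bmor m l)
  (x : {g : Bmor n.+1 m | inBox e g}) :
  Box_act (bcomp h f) x = Box_act h (Box_act f x).
Proof. by apply: sig_eq; rewrite /= bcomp_assoc. Qed.

Definition Box (n : nat) (e : bool) : cSet :=
  @CSet (fun m => {g : Bmor n.+1 m | inBox e g}) (@Box_act n e)
        (@Box_id n e) (@Box_comp n e).

Definition boxincl n e : cMap (Box n e) (Rep n.+1) :=
  @CMap (Box n e) (Rep n.+1) (fun m x => proj1_sig x) (fun _ _ _ _ => erefl).

(* Path object A^I (via I^n x I = I^(n+1), new variable last) and      *)
(* p : A^I -> A^(dI) = A x A induced by the endpoints 0, 1.            *)
Lemma Path_id (A : cSet) n (x : A n.+1) : cact (extend (bid n)) x = x.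
Proof. by rewrite extend_id cact_id. Qed.
Lemma Path_comp (A : cSet) n m l (g : Bmor m l) (f : Bmor n m) (x : A n.+1) :
  cact (extend (bcomp g f)) x = cact (extend g) (cact (extend f) x).
Proof. by rewrite extend_comp cact_comp. Qed.

Definition PathObj (A : cSet) : cSet :=
  @CSet (fun n => A n.+1) (fun n m f x => cact (extend f) x)
        (@Path_id A) (@Path_comp A).

Lemma ev_nat (A : cSet) (d : bool) n m (f : Bmor n m) (x : A n.+1) :
  cact (face ord_max d) (cact (extend f) x) = cact f (cact (face ord_max d) x).
Proof. by rewrite -!cact_comp face_extend. Qed.

Definition ev (A : cSet) (d : bool) : cMap (PathObj A) A :=
  @CMap (PathObj A) A (fun n x => cact (face ord_max d) x) (@ev_nat A d).

Lemma pathp_nat (A : cSet) n m (f : Bmor n m) (x : PathObj A n) :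
  (ev A false m (cact f x), ev A true m (cact f x))
  = (cact f (ev A false n x, ev A true n x).1, cact f (ev A false n x, ev A true n x).2).
Proof. by rewrite !cmap_nat. Qed.

Definition pathp (A : cSet) : cMap (PathObj A) (prodc A A) :=
  @CMap (PathObj A) (prodc A A) (fun n x => (ev A false n x, ev A true n x))
        (@pathp_nat A).

(* Dimensions n >= 1, k >= 1, j >= 1 are written n.+1, k.+1, j.+1.     *)
Record UKF (Y X : cSet) (f : cMap Y X) := {
  fill : forall (k n : nat) (e : bool)
           (a : cMap (prodc (Rep k.+1) (Rep n.+1)) X)
           (b : cMap (prodc (Rep k.+1) (Box n e)) Y),
           ceq (ccomp f b) (ccomp a (pmap1 (Rep k.+1) (boxincl n e))) ->
           cMap (prodc (Rep k.+1) (Rep n.+1)) Y;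
  fill_box : forall k n e a b (H : ceq (ccomp f b) (ccomp a (pmap1 _ (boxincl n e)))),
      ceq (ccomp (@fill k n e a b H) (pmap1 _ (boxincl n e))) b;
  fill_over : forall k n e a b (H : ceq (ccomp f b) (ccomp a (pmap1 _ (boxincl n e)))),
      ceq (ccomp f (@fill k n e a b H)) a;
  fill_unif : forall k j n e a b
      (H : ceq (ccomp f b) (ccomp a (pmap1 _ (boxincl n e))))
      (al : cMap (Rep j.+1) (Rep k.+1))
      (H' : ceq (ccomp f (ccomp b (pmapl _ al)))
                (ccomp (ccomp a (pmapl _ al)) (pmap1 _ (boxincl n e)))),
      ceq (ccomp (@fill k n e a b H) (pmapl _ al))
          (@fill j n e (ccomp a (pmapl _ al)) (ccomp b (pmapl _ al)) H') }.

(* normality: for all n >= 0, the box of dimension n+1 *)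
Definition normalUKF (Y X : cSet) (f : cMap Y X) (F : UKF f) : Prop :=
  forall (k n : nat) (e : bool) (c : cMap (prodc (Rep k.+1) (Rep n)) Y)
    (H : ceq (ccomp f (ccomp (ccomp c (pmap1 _ (proj1c n))) (pmap1 _ (boxincl n e))))
             (ccomp (ccomp f (ccomp c (pmap1 _ (proj1c n)))) (pmap1 _ (boxincl n e)))),
    ceq (@fill _ _ _ F k n e (ccomp f (ccomp c (pmap1 _ (proj1c n))))
               (ccomp (ccomp c (pmap1 _ (proj1c n))) (pmap1 _ (boxincl n e))) H)
        (ccomp c (pmap1 _ (proj1c n))).

Definition UKC (A : cSet) := UKF (toTerm A).

From mathcomp Require Import all_boot.
From Stdlib Require Import FunctionalExtensionality ProofIrrelevance.

Set Implicit Arguments.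
Unset Strict Implicit.
Unset Printing Implicit Defensive.

(* Since (A^I)_m = A_(m+1), with the path variable last, a filling problem for
   p : A^I -> A x A with parameter cube I^k and box of dimension n+1 is the
   same as a filling problem for A -> 1 with box of dimension n+2: the box
   part b supplies the faces transverse to the path variable and the endpoints
   a supply the two faces at its ends.  Filling it with the
   structure of A and transposing back gives the filler.  Uniformity holds
   because transposition only reindexes the parameter cube, and normality
   because the transpose of a degenerate problem is again degenerate. *)

(* On a presheaf, [cact (weaken_last m)] adds a dummy last variable and
   [cact (subst_last t)] substitutes [t] for the last variable. *)
Definition weaken_last m : Bmor m m.+1 :=
  @BMor m m.+1 (ptmap (lift ord_max)) erefl erefl.

Definition subst_last m (t : Pt m) : Bmor m.+1 m :=
  @BMor m.+1 m (fun x => match x with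
                       | inl b => inl b
                       | inr j => if unlift ord_max j is Some j' then inr j' else t
                       end) erefl erefl.

Lemma bfun_inl n m (f : Bmor n m) d : f (inl d) = inl d.
Proof. by case: d; rewrite ?bfun_bot ?bfun_top. Qed.

Lemma bcomp_id2 n m (g : Bmor n m) : bcomp g (bid n) = g.
Proof. exact: Bmor_eq. Qed.

Lemma lift_max_lift n (i : 'I_n.+1) (k : 'I_n) :
  lift ord_max (lift i k) = lift (lift ord_max i) (lift ord_max k).
Proof.
have n_lt_i : (n < i) = false by rewrite ltnNge -ltnS ltn_ord.
by apply: val_inj; rewrite [LHS]lift_max /= /bump (leqNgt n) ltn_ord n_lt_i.
Qed.

Lemma lift_ord0_max n : lift ord0 (@ord_max n) = ord_max.
Proof. exact: val_inj. Qed.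

Lemma face_self n (i : 'I_n.+1) d : face i d (inr i) = inl d.
Proof. by rewrite /= unlift_none. Qed.

Lemma face_lift n (i : 'I_n.+1) d k : face i d (inr (lift i k)) = inr k.
Proof. by rewrite /= liftK. Qed.

Lemma extend_max n m (f : Bmor n m) : extend f (inr ord_max) = inr ord_max.
Proof. by rewrite /= unlift_none. Qed.

Lemma extend_lift n m (f : Bmor n m) j :
  extend f (inr (lift ord_max j)) = ptmap (lift ord_max) (f (inr j)).
Proof. by rewrite /= liftK. Qed.

Lemma extend_face n (i : 'I_n.+1) d : extend (face i d) = face (lift ord_max i) d.
Proof.
apply: Bmor_eq => [[b|j]] //.
case: (unliftP ord_max j) => [j'|] ->.
  rewrite extend_lift; case: (unliftP i j') => [k|] ->.
    by rewrite lift_max_lift !face_lift.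
  by rewrite !face_self.
have max_lift : (ord_max : 'I_n.+2) = lift (lift ord_max i) ord_max.
  by apply: val_inj; rewrite /= /bump (leqNgt n.+1) ltn_ord /= -ltnS ltn_ord.
by rewrite extend_max [X in face _ _ (inr X)]max_lift face_lift.
Qed.

Lemma face_lift_weaken n (i : 'I_n.+1) d :
  bcomp (face (lift ord_max i) d) (weaken_last n.+1) = bcomp (weaken_last n) (face i d).
Proof.
apply: Bmor_eq => [[b|j]] //.
change (face (lift ord_max i) d (inr (lift ord_max j))
        = ptmap (lift ord_max) (face i d (inr j))).
case: (unliftP i j) => [k|] ->; first by rewrite lift_max_lift !face_lift.
by rewrite !face_self.
Qed.

Lemma face_max_weaken m d : bcomp (face (@ord_max m) d) (weaken_last m) = bid m.
Proof. by apply: Bmor_eq => [[b|j]] //=; rewrite liftK. Qed.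

Lemma extend_weaken n m (f : Bmor n m) :
  bcomp (extend f) (weaken_last n) = bcomp (weaken_last m) f.
Proof.
apply: Bmor_eq => [[b|j]] /=; first by rewrite !bfun_inl.
by rewrite liftK; case: (f (inr j)).
Qed.

Lemma subst_last_inl m d : subst_last (inl d) = face (@ord_max m) d.
Proof. by apply: Bmor_eq => [[b|j]]. Qed.

Lemma bcomp_subst_last n m (f : Bmor n m) t :
  bcomp f (subst_last t) = bcomp (subst_last (f t)) (extend f).
Proof.
apply: Bmor_eq => [[b|j]] /=; first by rewrite !bfun_inl.
case: unliftP => [j'|] _ /=; last by rewrite unlift_none.
by case: (f (inr j')) => [b|k] //=; rewrite liftK.
Qed.

Lemma subst_last_diag m :
  bcomp (subst_last (inr ord_max)) (extend (weaken_last m)) = bid m.+1.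
Proof.
apply: Bmor_eq => [[b|j]] //=.
case: unliftP => [j'|] -> /=; last by rewrite unlift_none.
by rewrite liftK.
Qed.

Lemma shift_weaken n :
  bcomp (shift n.+1) (weaken_last n) = bcomp (weaken_last n.+1) (shift n).
Proof.
apply: Bmor_eq => [[b|j]] //=; congr (inr _); apply: val_inj.
by rewrite /= /bump /= leqNgt ltn_ord /= ltnS leqNgt ltn_ord.
Qed.

Lemma inBox_weaken n e m (g : Bmor n.+2 m) j :
  inBox e g -> g (inr ord_max) = inr j -> inBox e (bcomp g (weaken_last n.+1)).
Proof.
case=> i [d [ne [h E]]] Ej.
case: (unliftP ord_max i) => [i'|] Ei; last first.
  by move: Ej; rewrite E Ei /= unlift_none bfun_inl.
exists i', d; split.
  by case=> Ei' Ed; apply: ne; rewrite Ei Ei' Ed; congr (_, _); apply: val_inj.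
by exists (bcomp h (weaken_last n)); rewrite E Ei /= bcomp_assoc face_lift_weaken -bcomp_assoc.
Qed.

Lemma inBox_extend n e m (g : Bmor n.+1 m) : inBox e g -> inBox e (extend g).
Proof.
case=> i [d [ne [h ->]]]; exists (lift ord_max i), d; split.
  case=> Ei Ed; apply: ne; rewrite Ed; congr (_, _); apply: val_inj.
  by move: Ei; rewrite /bump leqNgt ltn_ord.
by exists (extend h); rewrite /= extend_comp extend_face.
Qed.

Lemma inBox_face_max n e m (v : Bmor n.+1 m) d :
  @inBox n.+1 e m (bcomp v (face ord_max d)).
Proof. by exists ord_max, d; split; [case | exists v]. Qed.

Lemma cMap_eq X Y (f g : cMap X Y) : ceq f g -> f = g.
Proof.
case: f g => f fn [g gn] /= E.
have Efg : f = g.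
  by apply: functional_extensionality_dep => n; apply: functional_extensionality.
by subst g; f_equal; apply: proof_irrelevance.
Qed.

Lemma ceq_toTerm X (f g : cMap X Term) : ceq f g.
Proof. by move=> n x; case: (f n x); case: (g n x). Qed.

Lemma fill_congr Y X (f : cMap Y X) (F : UKF f) k n e a1 a2 b1 b2 H1 H2 :
  a1 = a2 -> b1 = b2 -> @fill _ _ _ F k n e a1 b1 H1 = @fill _ _ _ F k n e a2 b2 H2.
Proof. by move=> ea eb; subst; rewrite (proof_irrelevance _ H1 H2). Qed.

Definition sel (X : Type) (d : bool) (p : X * X) : X := if d then p.2 else p.1.

Lemma sel_act (A : cSet) m l (f : Bmor m l) d (p : A m * A m) :
  sel d (cact f p.1, cact f p.2) = cact f (sel d p).
Proof. by case: d. Qed.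

Lemma sel_pathp (A : cSet) m d (x : PathObj A m) :
  sel d (pathp A m x) = cact (face ord_max d) x.
Proof. by case: d. Qed.

Section PathTransposition.

Variables (A : cSet) (k n : nat).

Lemma curry_path_nat (c : cMap (prodc (Rep k) (Rep n.+1)) A)
    m l (f : Bmor m l) (x : prodc (Rep k) (Rep n) m) :
  c l.+1 (bcomp (weaken_last l) (bcomp f x.1), extend (bcomp f x.2))
  = cact (extend f) (c m.+1 (bcomp (weaken_last m) x.1, extend x.2)).
Proof. by rewrite -cmap_nat /= -bcomp_assoc -extend_weaken bcomp_assoc extend_comp. Qed.

Definition curry_path (c : cMap (prodc (Rep k) (Rep n.+1)) A) :
  cMap (prodc (Rep k) (Rep n)) (PathObj A) :=
  @CMap (prodc (Rep k) (Rep n)) (PathObj A)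
    (fun m x => c m.+1 (bcomp (weaken_last m) x.1, extend x.2)) (curry_path_nat c).

Lemma uncurry_path_nat (c : cMap (prodc (Rep k) (Rep n)) (PathObj A))
    m l (f : Bmor m l) (x : prodc (Rep k) (Rep n.+1) m) :
  cact (subst_last (bcomp f x.2 (inr ord_max)))
       (c l (bcomp f x.1, bcomp (bcomp f x.2) (weaken_last n)))
  = cact f (cact (subst_last (x.2 (inr ord_max))) (c m (x.1, bcomp x.2 (weaken_last n)))).
Proof.
rewrite bcomp_assoc.
have /= -> := cmap_nat c f (x.1, bcomp x.2 (weaken_last n)).
by rewrite -!cact_comp bcomp_subst_last.
Qed.

Definition uncurry_path (c : cMap (prodc (Rep k) (Rep n)) (PathObj A)) :
  cMap (prodc (Rep k) (Rep n.+1)) A :=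
  @CMap (prodc (Rep k) (Rep n.+1)) A
    (fun m x => cact (subst_last (x.2 (inr ord_max))) (c m (x.1, bcomp x.2 (weaken_last n))))
    (uncurry_path_nat c).

Lemma curry_uncurry_path c : ceq (curry_path (uncurry_path c)) c.
Proof.
move=> m [u v] /=.
rewrite unlift_none extend_weaken.
have /= -> := cmap_nat c (weaken_last m) (u, v).
by rewrite -cact_comp subst_last_diag cact_id.
Qed.

Lemma curry_path_face_max c m (u : Rep k m) (v : Rep n m) d :
  cact (face ord_max d) (curry_path c m (u, v)) = c m (u, bcomp v (face ord_max d)).
Proof. by rewrite /= -cmap_nat /= -bcomp_assoc face_max_weaken bcomp_id1 face_extend. Qed.

End PathTransposition.

Lemma curry_path_pmapl (A : cSet) j k n (al : cMap (Rep j) (Rep k))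
    (c : cMap (prodc (Rep k) (Rep n.+1)) A) :
  ceq (ccomp (curry_path c) (pmapl _ al)) (curry_path (ccomp c (pmapl _ al))).
Proof. by move=> m [u v] /=; have /= -> := cmap_nat al (weaken_last m) u. Qed.

Lemma uncurry_path_proj (A : cSet) k n (c : cMap (prodc (Rep k) (Rep n)) (PathObj A)) :
  ceq (uncurry_path (ccomp c (pmap1 _ (proj1c n))))
      (ccomp (uncurry_path c) (pmap1 _ (proj1c n.+1))).
Proof. by move=> m [u v] /=; rewrite lift_ord0_max !bcomp_assoc shift_weaken. Qed.

Section TransposedBox.

Variables (A : cSet) (k n : nat) (e : bool).
Variable a : cMap (prodc (Rep k) (Rep n.+1)) (prodc A A).
Variable b : cMap (prodc (Rep k) (Box n e)) (PathObj A).

(* A point g of the (n+2)-box either sends the path variable to an endpoint d,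
   and then lies on the face where a prescribes endpoint d, or to an interior
   variable x_j, and then the first n+1 coordinates of g lie in the (n+1)-box
   and we evaluate the path given there by b at x_j. *)
Definition transposed_box_at m (u : Rep k m) (g : Bmor n.+2 m) (Hg : inBox e g) t :
  g (inr ord_max) = t -> A m :=
  match t as t0 return g (inr ord_max) = t0 -> A m with
  | inl d => fun _ => sel d (a m (u, bcomp g (weaken_last n.+1)))
  | inr j => fun Ej => cact (subst_last (inr j))
      (b m (u, exist (fun g' => inBox e g') _ (inBox_weaken Hg Ej)))
  end.

Definition transposed_box_value m (u : Rep k m) (g : Bmor n.+2 m) (Hg : inBox e g) : A m :=
  @transposed_box_at m u g Hg (g (inr ord_max)) erefl.

Lemma transposed_box_valueE m (u : Rep k m) (g : Bmor n.+2 m) Hg t (Et : g (inr ord_max) = t) :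
  @transposed_box_value m u g Hg = @transposed_box_at m u g Hg t Et.
Proof. by rewrite /transposed_box_value; case: t / Et. Qed.

Lemma transposed_box_value_inl m (u : Rep k m) (g : Bmor n.+2 m) (Hg : inBox e g) d :
  g (inr ord_max) = inl d ->
  transposed_box_value u Hg = sel d (a m (u, bcomp g (weaken_last n.+1))).
Proof. by move=> Ed; rewrite (transposed_box_valueE u Hg Ed). Qed.

Lemma transposed_box_value_inr m (u : Rep k m) (g : Bmor n.+2 m) (Hg : inBox e g) j
    (Hgw : inBox e (bcomp g (weaken_last n.+1))) :
  g (inr ord_max) = inr j ->
  transposed_box_value u Hg = cact (subst_last (inr j)) (b m (u, exist _ _ Hgw)).
Proof.
move=> Ej; rewrite (transposed_box_valueE u Hg Ej) /=.
by rewrite (proof_irrelevance _ (inBox_weaken Hg Ej) Hgw).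
Qed.

Lemma box_point_eq m (u : Rep k m) (g1 g2 : Bmor n.+1 m) P Q : g1 = g2 ->
  b m (u, exist (fun g => inBox e g) g1 P) = b m (u, exist (fun g => inBox e g) g2 Q).
Proof. by move=> E; subst; rewrite (proof_irrelevance _ P Q). Qed.

Hypothesis Hab : ceq (ccomp (pathp A) b) (ccomp a (pmap1 _ (boxincl n e))).

Lemma transposed_box_value_nat m l (f : Bmor m l) (u : Rep k m) (g : Bmor n.+2 m)
    (Hg : inBox e g) :
  transposed_box_value (bcomp f u) (inBox_act f Hg)
  = cact f (transposed_box_value u Hg).
Proof.
set gw := bcomp g (weaken_last n.+1).
case Eg: (g (inr ord_max)) => [d|j].
  have Efg : bcomp f g (inr ord_max) = inl d by rewrite /= Eg bfun_inl.
  rewrite (transposed_box_value_inl _ _ Efg) (transposed_box_value_inl _ _ Eg).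
  by rewrite bcomp_assoc -sel_act; have /= <- := cmap_nat a f (u, gw).
have Hgw := inBox_weaken Hg Eg.
have /= b_nat := cmap_nat b f (u, exist (fun g' => inBox e g') gw Hgw).
rewrite (transposed_box_value_inr _ _ Hgw Eg) -cact_comp bcomp_subst_last cact_comp -b_nat.
case Ef: (f (inr j)) => [d|j'].
  have Efg : bcomp f g (inr ord_max) = inl d by rewrite /= Eg.
  rewrite (transposed_box_value_inl _ _ Efg) subst_last_inl -sel_pathp.
  by have /= -> := Hab (bcomp f u, Box_act f (exist _ gw Hgw)); rewrite bcomp_assoc.
have Efg : bcomp f g (inr ord_max) = inr j' by rewrite /= Eg.
rewrite (transposed_box_value_inr _ _ (inBox_weaken (inBox_act f Hg) Efg) Efg).
by congr (cact _ _); apply: box_point_eq; rewrite /= bcomp_assoc.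
Qed.

Definition transposed_box : cMap (prodc (Rep k) (Box n.+1 e)) A :=
  @CMap (prodc (Rep k) (Box n.+1 e)) A
    (fun m x => transposed_box_value x.1 (proj2_sig x.2))
    (fun m l f x => transposed_box_value_nat f x.1 (proj2_sig x.2)).

End TransposedBox.

Lemma transposed_box_pmapl (A : cSet) j k n e (al : cMap (Rep j) (Rep k))
    (a : cMap (prodc (Rep k) (Rep n.+1)) (prodc A A))
    (b : cMap (prodc (Rep k) (Box n e)) (PathObj A)) Hab Hab' :
  ceq (@transposed_box A j n e (ccomp a (pmapl _ al)) (ccomp b (pmapl _ al)) Hab')
      (ccomp (@transposed_box A k n e a b Hab) (pmapl _ al)).
Proof. by move=> m [x [g Hg]]. Qed.

Lemma transposed_box_restrict (A : cSet) k n e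
    (c : cMap (prodc (Rep k) (Rep n.+1)) (PathObj A)) Hab :
  ceq (@transposed_box A k n e (ccomp (pathp A) c) (ccomp c (pmap1 _ (boxincl n e))) Hab)
      (ccomp (uncurry_path c) (pmap1 _ (boxincl n.+1 e))).
Proof.
move=> m [u [g Hg]] /=.
case Eg: (g (inr ord_max)) => [d|j].
  by rewrite (transposed_box_value_inl _ _ _ _ Eg) sel_pathp subst_last_inl.
by rewrite (transposed_box_value_inr _ _ _ _ (inBox_weaken Hg Eg) Eg).
Qed.

Section PathFiller.

Variables (A : cSet) (F : UKF (toTerm A)) (k n : nat) (e : bool).
Variable a : cMap (prodc (Rep k.+1) (Rep n.+1)) (prodc A A).
Variable b : cMap (prodc (Rep k.+1) (Box n e)) (PathObj A).
Hypothesis Hab : ceq (ccomp (pathp A) b) (ccomp a (pmap1 _ (boxincl n e))).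

Definition transposed_filler : cMap (prodc (Rep k.+1) (Rep n.+2)) A :=
  @fill _ _ _ F k n.+1 e (toTerm _) (transposed_box Hab) (ceq_toTerm _ _).

Definition path_filler : cMap (prodc (Rep k.+1) (Rep n.+1)) (PathObj A) :=
  curry_path transposed_filler.

Lemma path_filler_box : ceq (ccomp path_filler (pmap1 _ (boxincl n e))) b.
Proof.
move=> m [u [g Hg]] /=.
have /= -> := fill_box F (ceq_toTerm (ccomp (toTerm A) (transposed_box Hab)) _)
  (bcomp (weaken_last m) u, exist (fun g' => inBox e g') _ (inBox_extend Hg)).
have Hgw := inBox_weaken (inBox_extend Hg) (extend_max g).
rewrite (transposed_box_value_inr _ _ _ _ Hgw (extend_max g)).
have -> : b m.+1 (bcomp (weaken_last m) u, exist _ _ Hgw)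
          = b m.+1 (@cact (prodc (Rep k.+1) (Box n e)) _ _ (weaken_last m) (u, exist _ g Hg)).
  by apply: box_point_eq; rewrite extend_weaken.
by rewrite cmap_nat /= -cact_comp subst_last_diag cact_id.
Qed.

Lemma path_filler_face_max m (u : Rep k.+1 m) (v : Rep n.+1 m) d :
  cact (face ord_max d) (path_filler m (u, v)) = sel d (a m (u, v)).
Proof.
rewrite curry_path_face_max.
have /= -> := fill_box F (ceq_toTerm (ccomp (toTerm A) (transposed_box Hab)) _)
  (u, exist (fun g' => inBox e g') _ (inBox_face_max e v d)).
have Ed : bcomp v (face ord_max d) (inr ord_max) = inl d by rewrite /= unlift_none bfun_inl.
by rewrite (transposed_box_value_inl _ _ _ _ Ed) bcomp_assoc face_max_weaken bcomp_id2.
Qed.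

Lemma path_filler_over : ceq (ccomp (pathp A) path_filler) a.
Proof.
move=> m [u v]; rewrite /= /ev /= !path_filler_face_max.
by case: (a m (u, v)).
Qed.

End PathFiller.

Lemma path_filler_pmapl (A : cSet) (F : UKF (toTerm A)) k j n e
    (a : cMap (prodc (Rep k.+1) (Rep n.+1)) (prodc A A))
    (b : cMap (prodc (Rep k.+1) (Box n e)) (PathObj A))
    (Hab : ceq (ccomp (pathp A) b) (ccomp a (pmap1 _ (boxincl n e))))
    (al : cMap (Rep j.+1) (Rep k.+1))
    (Hab' : ceq (ccomp (pathp A) (ccomp b (pmapl _ al)))
                (ccomp (ccomp a (pmapl _ al)) (pmap1 _ (boxincl n e)))) :
  ceq (ccomp (path_filler F Hab) (pmapl _ al)) (path_filler F Hab').
Proof.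
move=> m x; rewrite curry_path_pmapl /=.
have /= -> := @fill_unif _ _ _ F k j n.+1 e _ (transposed_box Hab) (ceq_toTerm _ _) al
  (ceq_toTerm _ _) m.+1 (bcomp (weaken_last m) x.1, extend x.2).
apply: (congr1 (fun c : cMap _ A => c m.+1 _)); apply: fill_congr; apply: cMap_eq.
  exact: ceq_toTerm.
by move=> l y; rewrite transposed_box_pmapl.
Qed.

Definition path_UKF (A : cSet) (F : UKF (toTerm A)) : UKF (pathp A) :=
  @Build_UKF _ _ (pathp A) (fun k n e a b Hab => path_filler F Hab)
    (fun k n e a b Hab => path_filler_box F Hab)
    (fun k n e a b Hab => path_filler_over F Hab)
    (fun k j n e a b Hab al Hab' => path_filler_pmapl F Hab Hab').

Lemma path_UKF_normal (A : cSet) (F : UKF (toTerm A)) :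
  normalUKF F -> normalUKF (path_UKF F).
Proof.
move=> NF k n e c Hc.
set d := ccomp c (pmap1 _ (proj1c n)).
have filler_eq : transposed_filler F Hc = uncurry_path d.
  apply: cMap_eq => l x; rewrite uncurry_path_proj.
  rewrite -(NF k n.+1 e (uncurry_path c) (ceq_toTerm _ _)).
  apply: (congr1 (fun f : cMap _ A => f l x)); apply: fill_congr; apply: cMap_eq.
    exact: ceq_toTerm.
  by move=> m y; rewrite transposed_box_restrict; apply: uncurry_path_proj.
by move=> m x; rewrite -(curry_uncurry_path d) -filler_eq.
Qed.

Theorem lemma3p10 (A : cSet) (F : UKF (toTerm A)) :
  normalUKF F -> exists G : UKF (pathp A), normalUKF G.
Proof. by move=> NF; exists (path_UKF F); apply: path_UKF_normal. Qed.
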